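(* Let $(X,d)$ be an arbitrary metric space and let $p\in X$. For $x,y\in X\setminus\{p\}$ define $$\tilde\tau_p(x,y)=\log\Big(1+\frac{d(x,y)}{\sqrt{d(x,p)d(y,p)}}\Big),\qquad \tau_p(x,y)=\log\Big(1+2\frac{d(x,y)}{\sqrt{d(x,p)d(y,p)}}\Big).$$ Then $(X\setminus\{p\},\tilde\tau_p)$ is Gromov hyperbolic with $\delta=\log 3$, and $(X\setminus\{p\},\tau_p)$ is Gromov hyperbolic with $\delta=\log 3+\log 2$.
   Context: A space $(Y,\rho)$ (with $\rho$ a symmetric nonnegative distance function) is Gromov hyperbolic with constant $\delta\ge 0$ if $\rho(x,y)+\rho(z,v)\leq \max\{\rho(x,z)+\rho(y,v),\ \rho(x,v)+\rho(y,z)\}+2\delta$ for all $x,y,z,v\in Y$. *)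

From Stdlib Require Import Reals.
Open Scope R_scope.

Definition is_metric {X : Type} (d : X -> X -> R) : Prop :=
  (forall x y, 0 <= d x y) /\
  (forall x y, d x y = 0 <-> x = y) /\
  (forall x y, d x y = d y x) /\
  (forall x y z, d x z <= d x y + d y z).

Definition gromov_hyperbolic {X : Type} (Y : X -> Prop) (rho : X -> X -> R)
  (delta : R) : Prop :=
  0 <= delta /\
  forall x y z v, Y x -> Y y -> Y z -> Y v ->
    rho x y + rho z v <=
      Rmax (rho x z + rho y v) (rho x v + rho y z) + 2 * delta.

Definition tau_tilde {X : Type} (d : X -> X -> R) (p x y : X) : R :=
  ln (1 + d x y / sqrt (d x p * d y p)).

Definition tau {X : Type} (d : X -> X -> R) (p x y : X) : R :=
  ln (1 + 2 * (d x y / sqrt (d x p * d y p))).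

(* Write a_x = sqrt d(x,p) and N(x,y) = a_x a_y + d(x,y), so that
   exp tau_tilde_p(x,y) = N(x,y) / (a_x a_y).  The denominators cancel in the
   products of the four-point condition, so it suffices to show
   N(x,y) N(z,v) <= 9 max (N(x,z) N(y,v), N(x,v) N(y,z)).  By symmetry a_x is the
   largest of the four; the triangle inequality through p then gives
   N(x,y) <= 3 a_x^2, N(z,v) <= 3 max (N(y,v), N(y,z)), and a_x^2 <= N(x,z), N(x,v).
   Taking logarithms yields delta = log 3.  Since 1 + t <= 1 + 2t <= 2 (1 + t),
   passing to tau_p changes each product by a factor at most 4, costing log 2. *)

From Stdlib Require Import Reals Lra.
Open Scope R_scope.

Lemma ln_le (a b : R) : 0 < a -> a <= b -> ln a <= ln b.
Proof.
  intros Ha [Hab | <-]; [left; exact (ln_increasing a b Ha Hab) | lra].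
Qed.

Lemma sqr_le_mul_add (s t u : R) :
  0 <= s -> 0 <= t -> 0 <= u -> t * t <= u + s * s -> t * t <= s * t + u.
Proof. intros; destruct (Rle_lt_dec t s); nra. Qed.

Lemma Rmult_Rmax_le (s a1 a2 b1 b2 : R) :
  0 <= b1 -> 0 <= b2 -> s <= a1 -> s <= a2 -> s * Rmax b1 b2 <= Rmax (a1 * b1) (a2 * b2).
Proof.
  intros Hb1 Hb2 Ha1 Ha2; apply (Rmax_case b1 b2 (fun m => s * m <= _)).
  - apply Rle_trans with (2 := Rmax_l _ _); apply Rmult_le_compat_r; assumption.
  - apply Rle_trans with (2 := Rmax_r _ _); apply Rmult_le_compat_r; assumption.
Qed.

(* For [f = exp rho] this is Gromov hyperbolicity of [rho] with [K = exp (2 delta)]. *)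
Definition four_point_mult {X : Type} (Y : X -> Prop) (f : X -> X -> R) (K : R) : Prop :=
  forall x y z v, Y x -> Y y -> Y z -> Y v ->
    f x y * f z v <= K * Rmax (f x z * f y v) (f x v * f y z).

Lemma gromov_hyperbolic_ln {X : Type} (Y : X -> Prop) (f : X -> X -> R) (k : R) :
  1 <= k -> (forall x y, Y x -> Y y -> 0 < f x y) ->
  four_point_mult Y f (k * k) ->
  gromov_hyperbolic Y (fun x y => ln (f x y)) (ln k).
Proof.
  intros Hk Hpos Hf; split.
  - rewrite <- ln_1; apply ln_le; lra.
  - intros x y z v Hx Hy Hz Hv.
    pose proof (Hpos x y Hx Hy); pose proof (Hpos z v Hz Hv).
    pose proof (Hpos x z Hx Hz); pose proof (Hpos y v Hy Hv).
    pose proof (Hpos x v Hx Hv); pose proof (Hpos y z Hy Hz).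
    set (M := Rmax (f x z * f y v) (f x v * f y z)).
    assert (HM : 0 < M) by (apply Rlt_le_trans with (2 := Rmax_l _ _); nra).
    assert (Hln_M : ln M <= Rmax (ln (f x z) + ln (f y v)) (ln (f x v) + ln (f y z))).
    { rewrite <- !ln_mult by assumption.
      apply (Rmax_case _ _ (fun m => ln m <= _)); [apply Rmax_l | apply Rmax_r]. }
    rewrite <- ln_mult by assumption.
    apply Rle_trans with (ln (k * k * M)).
    + apply ln_le; [nra | exact (Hf x y z v Hx Hy Hz Hv)].
    + rewrite !ln_mult by nra; lra.
Qed.

Lemma four_point_mult_wlog {X : Type} (Y : X -> Prop) (f : X -> X -> R) (K : R)
    (w : X -> R) :
  (forall x y, Y x -> Y y -> f x y = f y x) ->
  (forall x y z v, Y x -> Y y -> Y z -> Y v ->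
     w y <= w x -> w z <= w x -> w v <= w x ->
     f x y * f z v <= K * Rmax (f x z * f y v) (f x v * f y z)) ->
  four_point_mult Y f K.
Proof.
  intros Hsym Hmax.
  (* The symmetries x <-> y and (x, y) <-> (z, v) move any point to the first slot. *)
  assert (swap_left : forall x y z v, Y x -> Y y -> Y z -> Y v ->
    f x y * f z v <= K * Rmax (f x z * f y v) (f x v * f y z) ->
    f y x * f z v <= K * Rmax (f y z * f x v) (f y v * f x z)).
  { intros x y z v Hx Hy Hz Hv H.
    rewrite (Hsym y x), Rmax_comm, (Rmult_comm (f y z)), (Rmult_comm (f y v)) by assumption.
    exact H. }
  assert (swap_pairs : forall x y z v, Y x -> Y y -> Y z -> Y v ->
    f x y * f z v <= K * Rmax (f x z * f y v) (f x v * f y z) ->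
    f z v * f x y <= K * Rmax (f z x * f v y) (f z y * f v x)).
  { intros x y z v Hx Hy Hz Hv H.
    rewrite (Hsym z x), (Hsym v y), (Hsym z y), (Hsym v x), (Rmult_comm (f z v)),
      (Rmult_comm (f y z)) by assumption.
    exact H. }
  intros x y z v Hx Hy Hz Hv.
  destruct (Rle_lt_dec (w y) (w x)), (Rle_lt_dec (w v) (w z)),
    (Rle_lt_dec (w z) (w x)), (Rle_lt_dec (w z) (w y)),
    (Rle_lt_dec (w v) (w x)), (Rle_lt_dec (w v) (w y));
  first [ apply Hmax; auto; lra
        | apply swap_left; auto; apply Hmax; auto; lra
        | apply swap_pairs; auto; apply Hmax; auto; lra
        | apply swap_pairs; auto; apply swap_left; auto; apply Hmax; auto; lra ].
Qed.

Lemma four_point_mult_div {X : Type} (Y : X -> Prop) (f g : X -> X -> R) (K : R)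
    (w : X -> R) :
  (forall x, Y x -> 0 < w x) ->
  (forall x y, Y x -> Y y -> f x y * (w x * w y) = g x y) ->
  four_point_mult Y g K -> four_point_mult Y f K.
Proof.
  intros Hw Hfg Hg x y z v Hx Hy Hz Hv.
  pose proof (Hw x Hx); pose proof (Hw y Hy); pose proof (Hw z Hz); pose proof (Hw v Hv).
  set (W := w x * w y * w z * w v).
  assert (HW : 0 < W) by (unfold W; repeat apply Rmult_lt_0_compat; assumption).
  assert (Hprod : forall a b c e, Y a -> Y b -> Y c -> Y e ->
    w a * w b * w c * w e = W -> W * (f a b * f c e) = g a b * g c e).
  { intros a b c e Ha Hb Hc He <-.
    rewrite <- (Hfg a b), <- (Hfg c e) by assumption; ring. }
  apply Rmult_le_reg_r with W; [exact HW |].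
  rewrite (Rmult_comm (f x y * f z v)), (Rmult_assoc K), (Rmult_comm (Rmax _ _)),
    <- RmaxRmult by lra.
  rewrite !Hprod by (auto; unfold W; ring).
  exact (Hg x y z v Hx Hy Hz Hv).
Qed.

Lemma four_point_mult_compare {X : Type} (Y : X -> Prop) (f g : X -> X -> R) (K c : R) :
  0 <= K ->
  (forall x y, Y x -> Y y -> 0 <= f x y <= g x y /\ g x y <= c * f x y) ->
  four_point_mult Y f K -> four_point_mult Y g (c * c * K).
Proof.
  intros HK Hfg Hf x y z v Hx Hy Hz Hv.
  pose proof (Hfg x y Hx Hy); pose proof (Hfg z v Hz Hv).
  pose proof (Hfg x z Hx Hz); pose proof (Hfg y v Hy Hv).
  pose proof (Hfg x v Hx Hv); pose proof (Hfg y z Hy Hz).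
  apply Rle_trans with (c * c * (f x y * f z v)).
  { replace (c * c * (f x y * f z v)) with ((c * f x y) * (c * f z v)) by ring.
    apply Rmult_le_compat; lra. }
  rewrite (Rmult_assoc (c * c) K); apply Rmult_le_compat_l; [nra |].
  apply Rle_trans with (1 := Hf x y z v Hx Hy Hz Hv).
  apply Rmult_le_compat_l; [exact HK |].
  apply Rmax_lub.
  - apply Rle_trans with (2 := Rmax_l _ _); apply Rmult_le_compat; lra.
  - apply Rle_trans with (2 := Rmax_r _ _); apply Rmult_le_compat; lra.
Qed.

Section PointedMetric.
Variables (X : Type) (d : X -> X -> R) (p : X).
Hypothesis Hd : is_metric d.

Definition tau_tilde_numer (x y : X) : R := sqrt (d x p) * sqrt (d y p) + d x y.

Lemma dist_nonneg (x y : X) : 0 <= d x y.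
Proof. apply Hd. Qed.

Lemma dist_sym (x y : X) : d x y = d y x.
Proof. apply Hd. Qed.

Lemma dist_triangle (x y z : X) : d x z <= d x y + d y z.
Proof. apply Hd. Qed.

Lemma dist_pos (x y : X) : x <> y -> 0 < d x y.
Proof.
  intro Hxy; destruct (dist_nonneg x y) as [| Heq]; [assumption |].
  exfalso; apply Hxy, Hd; symmetry; exact Heq.
Qed.

Lemma dist_le_sqr_sqrt (x y : X) :
  d x y <= sqrt (d x p) * sqrt (d x p) + sqrt (d y p) * sqrt (d y p).
Proof.
  rewrite !sqrt_sqrt by apply dist_nonneg.
  rewrite (dist_sym y p); apply dist_triangle.
Qed.

Lemma sqr_sqrt_le_mul_dist (x y : X) :
  sqrt (d x p) * sqrt (d x p) <= sqrt (d y p) * sqrt (d x p) + d x y.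
Proof.
  apply sqr_le_mul_add; [apply sqrt_pos | apply sqrt_pos | apply dist_nonneg |].
  rewrite !sqrt_sqrt by apply dist_nonneg; apply dist_triangle.
Qed.

Lemma tau_tilde_numer_four_point_of_max (x y z v : X) :
  d y p <= d x p -> d z p <= d x p -> d v p <= d x p ->
  tau_tilde_numer x y * tau_tilde_numer z v <=
    9 * Rmax (tau_tilde_numer x z * tau_tilde_numer y v)
             (tau_tilde_numer x v * tau_tilde_numer y z).
Proof.
  intros Hyx Hzx Hvx; unfold tau_tilde_numer.
  pose proof (sqrt_le_1_alt _ _ Hyx); pose proof (sqrt_le_1_alt _ _ Hzx);
  pose proof (sqrt_le_1_alt _ _ Hvx).
  pose proof (sqrt_pos (d y p)); pose proof (sqrt_pos (d z p)); pose proof (sqrt_pos (d v p)).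
  pose proof (dist_nonneg x y); pose proof (dist_nonneg z v).
  pose proof (dist_le_sqr_sqrt x y).
  pose proof (sqr_sqrt_le_mul_dist x z); pose proof (sqr_sqrt_le_mul_dist x v).
  pose proof (sqr_sqrt_le_mul_dist v y); pose proof (sqr_sqrt_le_mul_dist z y).
  pose proof (dist_triangle z y v).
  rewrite (dist_sym v y) in *; rewrite (dist_sym z y) in *.
  set (a := sqrt (d x p)) in *; set (b := sqrt (d y p)) in *;
  set (g := sqrt (d z p)) in *; set (e := sqrt (d v p)) in *.
  set (M := Rmax (b * e + d y v) (b * g + d y z)).
  assert (HMe : b * e + d y v <= M) by apply Rmax_l.
  assert (HMg : b * g + d y z <= M) by apply Rmax_r.
  assert (Hfirst : a * b + d x y <= 3 * (a * a)) by nra.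
  assert (Hsecond : g * e + d z v <= 3 * M).
  { pose proof (Rle_0_sqr (g - e)); unfold Rsqr in *; nra. }
  assert (Hcross : a * a * M <=
    Rmax ((a * g + d x z) * (b * e + d y v)) ((a * e + d x v) * (b * g + d y z))).
  { apply Rmult_Rmax_le; nra. }
  apply Rle_trans with (3 * (a * a) * (3 * M)); [apply Rmult_le_compat; nra | lra].
Qed.

Lemma four_point_mult_tau_tilde_numer (Y : X -> Prop) : four_point_mult Y tau_tilde_numer 9.
Proof.
  apply four_point_mult_wlog with (w := fun x => d x p).
  - intros x y _ _; unfold tau_tilde_numer; rewrite (dist_sym x y); ring.
  - intros x y z v _ _ _ _; apply tau_tilde_numer_four_point_of_max.
Qed.

Lemma tau_ratio_nonneg (x y : X) : x <> p -> y <> p -> 0 <= d x y / sqrt (d x p * d y p).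
Proof.
  intros Hx Hy; apply Rle_mult_inv_pos; [apply dist_nonneg |].
  apply sqrt_lt_R0, Rmult_lt_0_compat; apply dist_pos; assumption.
Qed.

Lemma tau_tilde_exp_mul (x y : X) : x <> p -> y <> p ->
  (1 + d x y / sqrt (d x p * d y p)) * (sqrt (d x p) * sqrt (d y p)) = tau_tilde_numer x y.
Proof.
  intros Hx Hy; unfold tau_tilde_numer.
  pose proof (sqrt_lt_R0 _ (dist_pos x p Hx)); pose proof (sqrt_lt_R0 _ (dist_pos y p Hy)).
  rewrite sqrt_mult by (apply dist_nonneg).
  field; lra.
Qed.

Lemma four_point_mult_tau_tilde_exp :
  four_point_mult (fun x => x <> p) (fun x y => 1 + d x y / sqrt (d x p * d y p)) 9.
Proof.
  apply four_point_mult_div with (w := fun x => sqrt (d x p)) (g := tau_tilde_numer).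
  - intros x Hx; apply sqrt_lt_R0, dist_pos, Hx.
  - exact tau_tilde_exp_mul.
  - apply four_point_mult_tau_tilde_numer.
Qed.

End PointedMetric.

Theorem lemma4p1 (X : Type) (d : X -> X -> R) (p : X) :
  is_metric d ->
  gromov_hyperbolic (fun x => x <> p) (tau_tilde d p) (ln 3) /\
  gromov_hyperbolic (fun x => x <> p) (tau d p) (ln 3 + ln 2).
Proof.
  intro Hd.
  pose proof (tau_ratio_nonneg X d p Hd) as Hratio.
  split.
  - apply (gromov_hyperbolic_ln _ (fun x y => 1 + d x y / sqrt (d x p * d y p))).
    + lra.
    + intros x y Hx Hy; pose proof (Hratio x y Hx Hy); lra.
    + replace (3 * 3) with 9 by ring; exact (four_point_mult_tau_tilde_exp X d p Hd).
  - rewrite <- ln_mult by lra.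
    apply (gromov_hyperbolic_ln _ (fun x y => 1 + 2 * (d x y / sqrt (d x p * d y p)))).
    + lra.
    + intros x y Hx Hy; pose proof (Hratio x y Hx Hy); lra.
    + replace (3 * 2 * (3 * 2)) with (2 * 2 * 9) by ring.
      apply four_point_mult_compare
        with (f := fun x y => 1 + d x y / sqrt (d x p * d y p)).
      * lra.
      * intros x y Hx Hy; pose proof (Hratio x y Hx Hy); lra.
      * exact (four_point_mult_tau_tilde_exp X d p Hd).
Qed.
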